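(* Let $A,B\subset\mathbb R^n$ with $\dim_H(A\times B)<n$, let $M_2>M_1>0$, and let $f: B\times\mathbb R^n\to\mathbb R^n$ satisfy $\|f(x,t)-f(y,t)\|\le M_1\|x-y\|$ and $\|f(x,t)-f(x,t')\|\le M_1\|t-t'\|$ for all $x,y\in B$, $t,t'\in\mathbb R^n$. Then the set $\Delta=\{t\in\mathbb R^n:\ (M_2t+f(B,t))\cap A\ne\varnothing\}$ has Lebesgue measure zero in $\mathbb R^n$, where $M_2t+f(B,t)=\{M_2t+f(x,t): x\in B\}$.
   Context: $\dim_H$ denotes Hausdorff dimension. *)

(* classical reals.  Points of R^m are represented as
   functions nat -> R of which only the coordinates i < m are relevant;
   every notion below only inspects those coordinates. *)
From Stdlib Require Import Reals.
Open Scope R_scope.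

Fixpoint sumR (m : nat) (g : nat -> R) : R :=
  match m with O => 0 | S k => sumR k g + g k end.

Fixpoint prodR (m : nat) (g : nat -> R) : R :=
  match m with O => 1 | S k => prodR k g * g k end.

Definition edist (m : nat) (x y : nat -> R) : R :=
  sqrt (sumR m (fun i => (x i - y i) ^ 2)).

Definition lebesgue_null (m : nat) (E : (nat -> R) -> Prop) : Prop :=
  forall eps : R, 0 < eps ->
  exists a b : nat -> nat -> R,
    (forall k i, (i < m)%nat -> a k i <= b k i) /\
    (forall x, E x -> exists k, forall i, (i < m)%nat -> a k i <= x i <= b k i) /\
    (forall N, sum_f_R0 (fun k => prodR m (fun i => b k i - a k i)) N <= eps).

(* s-dimensional Hausdorff measure zero in R^m (s > 0):
   H^s(E) = lim_{delta->0} H^s_delta(E) = 0, i.e. for every delta > 0 and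
   eps > 0 there is a countable cover (U_k) with diam U_k <= r_k <= delta
   and sum r_k^s <= eps. *)
Definition hausdorff_null (m : nat) (s : R) (E : (nat -> R) -> Prop) : Prop :=
  forall delta eps : R, 0 < delta -> 0 < eps ->
  exists (U : nat -> (nat -> R) -> Prop) (r : nat -> R),
    (forall k, 0 < r k <= delta) /\
    (forall k x y, U k x -> U k y -> edist m x y <= r k) /\
    (forall x, E x -> exists k, U k x) /\
    (forall N, sum_f_R0 (fun k => Rpower (r k) s) N <= eps).

(* dim_H E < d  iff  H^s(E) = 0 for some 0 < s < d
   (dim_H E = inf {s >= 0 | H^s(E) = 0}). *)
Definition dimH_lt (m : nat) (E : (nat -> R) -> Prop) (d : R) : Prop :=
  exists s : R, 0 < s < d /\ hausdorff_null m s E.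

Definition prod_set (n : nat) (A B : (nat -> R) -> Prop) : (nat -> R) -> Prop :=
  fun z => exists a b, A a /\ B b /\
    forall i, (i < n)%nat -> z i = a i /\ z (n + i)%nat = b i.

Definition Delta_set (n : nat) (A B : (nat -> R) -> Prop) (M2 : R)
  (f : (nat -> R) -> (nat -> R) -> (nat -> R)) : (nat -> R) -> Prop :=
  fun t => exists x a, B x /\ A a /\
    forall i, (i < n)%nat -> a i = M2 * t i + f x t i.

(* Every t in Delta comes with a witness (a, x) in A x B, a = M2 t + f(x, t).
   Since M2 > M1 dominates the Lipschitz constant of f in t, t is recovered
   from its witness in a Lipschitz way: |t - t'| <= L |(a, x) - (a', x')|.
   Hence Delta is (covered by) a Lipschitz image of A x B, so H^s(Delta) = 0
   for some s < n, and a set of R^n that is H^s-null with s <= n is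
   Lebesgue-null. *)
From Stdlib Require Import Reals Lra Lia Psatz ClassicalEpsilon.
Open Scope R_scope.

Lemma sumR_le m g h :
  (forall i, (i < m)%nat -> g i <= h i) -> sumR m g <= sumR m h.
Proof.
  induction m as [|m IH]; simpl; intros H; [lra|].
  assert (g m <= h m) by (apply H; lia).
  assert (sumR m g <= sumR m h) by (apply IH; intros; apply H; lia).
  lra.
Qed.

Lemma sumR_ext m g h :
  (forall i, (i < m)%nat -> g i = h i) -> sumR m g = sumR m h.
Proof.
  intros H; apply Rle_antisym; apply sumR_le; intros i Hi; rewrite H by exact Hi; lra.
Qed.

Lemma sumR_add m g h : sumR m (fun i => g i + h i) = sumR m g + sumR m h.
Proof. induction m as [|m IH]; simpl; [lra | rewrite IH; lra]. Qed.

Lemma sumR_scal m c g : sumR m (fun i => c * g i) = c * sumR m g.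
Proof. induction m as [|m IH]; simpl; [lra | rewrite IH; lra]. Qed.

Lemma sumR_ge0 m g : (forall i, (i < m)%nat -> 0 <= g i) -> 0 <= sumR m g.
Proof.
  intros H; rewrite <- (Rmult_0_l (sumR m g)), <- sumR_scal.
  apply sumR_le; intros i Hi; rewrite Rmult_0_l; apply H, Hi.
Qed.

Lemma sumR_ge_term m g i :
  (forall j, (j < m)%nat -> 0 <= g j) -> (i < m)%nat -> g i <= sumR m g.
Proof.
  induction m as [|m IH]; simpl; intros H Hi; [lia|].
  destruct (Nat.eq_dec i m) as [->|Hne].
  - assert (0 <= sumR m g) by (apply sumR_ge0; intros; apply H; lia). lra.
  - assert (g i <= sumR m g) by (apply IH; [intros; apply H; lia | lia]).
    assert (0 <= g m) by (apply H; lia). lra.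
Qed.

Lemma sumR_add_range n m g :
  sumR (n + m) g = sumR n g + sumR m (fun i => g (n + i)%nat).
Proof.
  induction m as [|m IH]; simpl; [rewrite Nat.add_0_r; lra|].
  rewrite Nat.add_succ_r; simpl; rewrite IH; lra.
Qed.

Lemma prodR_ext m g h :
  (forall i, (i < m)%nat -> g i = h i) -> prodR m g = prodR m h.
Proof.
  induction m as [|m IH]; simpl; intros H; [reflexivity|].
  rewrite (H m) by lia; rewrite IH by (intros; apply H; lia); reflexivity.
Qed.

Lemma prodR_const m c : prodR m (fun _ => c) = c ^ m.
Proof. induction m as [|m IH]; simpl; [lra | rewrite IH; ring]. Qed.

Definition sqdist (m : nat) (x y : nat -> R) : R :=
  sumR m (fun i => (x i - y i) ^ 2).

Lemma sqdist_ge0 m x y : 0 <= sqdist m x y.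
Proof. apply sumR_ge0; intros; apply pow2_ge_0. Qed.

Lemma sqdist_of_edist_le m m' x y x' y' c : 0 <= c ->
  edist m x y <= c * edist m' x' y' -> sqdist m x y <= c ^ 2 * sqdist m' x' y'.
Proof.
  unfold edist; fold (sqdist m x y) (sqdist m' x' y'); intros Hc H.
  pose proof (sqrt_sqrt _ (sqdist_ge0 m x y)).
  pose proof (sqrt_sqrt _ (sqdist_ge0 m' x' y')).
  pose proof (sqrt_pos (sqdist m x y)); pose proof (sqrt_pos (sqdist m' x' y')).
  nra.
Qed.

Lemma edist_le_of_sqdist_le m m' x y x' y' c : 0 <= c ->
  sqdist m x y <= c ^ 2 * sqdist m' x' y' -> edist m x y <= c * edist m' x' y'.
Proof.
  intros Hc H; unfold edist; fold (sqdist m x y) (sqdist m' x' y').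
  rewrite <- (sqrt_pow2 c Hc), <- sqrt_mult by (apply pow2_ge_0 || apply sqdist_ge0).
  now apply sqrt_le_1_alt.
Qed.

Lemma Rabs_coord_le_edist m x y i :
  (i < m)%nat -> Rabs (x i - y i) <= edist m x y.
Proof.
  intros Hi; rewrite <- sqrt_Rsqr_abs; apply sqrt_le_1_alt; unfold Rsqr.
  replace ((x i - y i) * (x i - y i)) with ((x i - y i) ^ 2) by ring.
  apply (sumR_ge_term m (fun i => (x i - y i) ^ 2)); [intros; apply pow2_ge_0 | exact Hi].
Qed.

Lemma sqdist_block n z z' a a' b b' :
  (forall i, (i < n)%nat -> z i = a i /\ z (n + i)%nat = b i) ->
  (forall i, (i < n)%nat -> z' i = a' i /\ z' (n + i)%nat = b' i) ->
  sqdist (2 * n) z z' = sqdist n a a' + sqdist n b b'.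
Proof.
  intros Hz Hz'; unfold sqdist.
  replace (2 * n)%nat with (n + n)%nat by lia; rewrite sumR_add_range.
  f_equal; apply sumR_ext; intros i Hi;
    destruct (Hz i Hi), (Hz' i Hi); congruence.
Qed.

Lemma sqr_add_le_convex (u v lam : R) : 0 < lam < 1 ->
  (u + v) ^ 2 <= u ^ 2 / lam + v ^ 2 / (1 - lam).
Proof.
  intros Hl.
  assert (E : u ^ 2 / lam + v ^ 2 / (1 - lam) - (u + v) ^ 2
              = ((1 - lam) * u - lam * v) ^ 2 / (lam * (1 - lam))) by (field; lra).
  assert (0 <= ((1 - lam) * u - lam * v) ^ 2 / (lam * (1 - lam))).
  { apply Rmult_le_pos; [apply pow2_ge_0 | apply Rlt_le, Rinv_0_lt_compat; nra]. }
  lra.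
Qed.

Lemma sqr_sub_sub_le (M1 M2 w p q : R) : 0 < M1 -> M1 < M2 ->
  (w - p - q) ^ 2 <= M2 / M1 * p ^ 2 + 2 * M2 / (M2 - M1) * (w ^ 2 + q ^ 2).
Proof.
  intros HM1 HM2.
  assert (Hlam : 0 < M1 / M2 < 1).
  { split; [apply Rdiv_lt_0_compat; lra|].
    unfold Rdiv; apply (Rmult_lt_reg_r M2); [lra|].
    rewrite Rmult_assoc, Rinv_l by lra; lra. }
  replace (w - p - q) with (- p + (w - q)) by ring.
  eapply Rle_trans; [apply sqr_add_le_convex, Hlam|].
  replace ((- p) ^ 2 / (M1 / M2)) with (M2 / M1 * p ^ 2) by (field; lra).
  replace ((w - q) ^ 2 / (1 - M1 / M2)) with (M2 / (M2 - M1) * (w - q) ^ 2)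
    by (field; lra).
  replace (2 * M2 / (M2 - M1)) with (M2 / (M2 - M1) * 2) by (field; lra).
  assert ((w - q) ^ 2 <= 2 * (w ^ 2 + q ^ 2)) by (pose proof (pow2_ge_0 (w + q)); nra).
  assert (0 < M2 / (M2 - M1)) by (apply Rdiv_lt_0_compat; lra).
  nra.
Qed.

(* [sqr_sub_sub_le] applied to each coordinate of
   M2 (t - t') = (a - a') - (f x t - f x t') - (f x t' - f x' t'). *)
Lemma sqdist_inverse_lipschitz n (B : (nat -> R) -> Prop) M1 M2
  (f : (nat -> R) -> (nat -> R) -> (nat -> R)) :
  0 < M1 -> M1 < M2 ->
  (forall x y t, B x -> B y -> edist n (f x t) (f y t) <= M1 * edist n x y) ->
  (forall x t t', B x -> edist n (f x t) (f x t') <= M1 * edist n t t') ->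
  forall x x' a a' t t', B x -> B x' ->
  (forall i, (i < n)%nat -> a i = M2 * t i + f x t i) ->
  (forall i, (i < n)%nat -> a' i = M2 * t' i + f x' t' i) ->
  sqdist n t t' <= 2 * (1 + M1 ^ 2) / (M2 - M1) ^ 2 * (sqdist n a a' + sqdist n x x').
Proof.
  intros HM1 HM2 Lx Lt x x' a a' t t' Bx Bx' Ha Ha'.
  set (T := sqdist n t t'); set (W := sqdist n a a'); set (X := sqdist n x x').
  set (P := sqdist n (f x t) (f x t')); set (Q := sqdist n (f x t') (f x' t')).
  assert (HP : P <= M1 ^ 2 * T) by (apply sqdist_of_edist_le; [lra | now apply Lt]).
  assert (HQ : Q <= M1 ^ 2 * X) by (apply sqdist_of_edist_le; [lra | now apply Lx]).
  assert (Hsum : M2 ^ 2 * T <= M2 / M1 * P + 2 * M2 / (M2 - M1) * (W + Q)).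
  { unfold T, P, W, Q, sqdist.
    rewrite <- sumR_add, <- !sumR_scal, <- sumR_add.
    apply sumR_le; intros i Hi.
    replace (M2 ^ 2 * (t i - t' i) ^ 2) with
      (((a i - a' i) - (f x t i - f x t' i) - (f x t' i - f x' t' i)) ^ 2)
      by (rewrite (Ha i Hi), (Ha' i Hi); ring).
    now apply sqr_sub_sub_le. }
  assert (HW : 0 <= W) by apply sqdist_ge0.
  assert (HX : 0 <= X) by apply sqdist_ge0.
  assert (Hc1 : 0 < M2 / M1) by (apply Rdiv_lt_0_compat; lra).
  assert (Hc2 : 0 < 2 * M2 / (M2 - M1)) by (apply Rdiv_lt_0_compat; lra).
  assert (Hk : M2 * (M2 - M1) * T <= 2 * M2 / (M2 - M1) * ((1 + M1 ^ 2) * (W + X))).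
  { assert (M2 / M1 * P <= M2 * M1 * T).
    { replace (M2 * M1 * T) with (M2 / M1 * (M1 ^ 2 * T)) by (field; lra).
      apply Rmult_le_compat_l; lra. }
    assert (W + Q <= (1 + M1 ^ 2) * (W + X)) by (pose proof (pow2_ge_0 M1); nra).
    nra. }
  apply (Rmult_le_reg_l (M2 * (M2 - M1))); [nra|].
  replace (M2 * (M2 - M1) * (2 * (1 + M1 ^ 2) / (M2 - M1) ^ 2 * (W + X)))
    with (2 * M2 / (M2 - M1) * ((1 + M1 ^ 2) * (W + X))) by (field; lra).
  exact Hk.
Qed.

Lemma hausdorff_null_lipschitz_image m n s L (F E : (nat -> R) -> Prop)
  (rel : (nat -> R) -> (nat -> R) -> Prop) :
  0 < L -> hausdorff_null m s F ->
  (forall t, E t -> exists z, F z /\ rel t z) ->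
  (forall t t' z z', rel t z -> rel t' z' -> edist n t t' <= L * edist m z z') ->
  hausdorff_null n s E.
Proof.
  intros HL HF Hcov Hlip delta eps Hdelta Heps.
  assert (HLs : 0 < Rpower L s) by apply exp_pos.
  destruct (HF (delta / L) (eps / Rpower L s)) as [U [r [Hr [Hdiam [HU Hsum]]]]];
    try (apply Rdiv_lt_0_compat; assumption).
  exists (fun k t => exists z, U k z /\ rel t z), (fun k => L * r k).
  split; [|split; [|split]].
  - intros k; destruct (Hr k) as [Hr0 Hr1]; split; [nra|].
    apply (Rmult_le_compat_l L) in Hr1; [|lra].
    replace (L * (delta / L)) with delta in Hr1 by (field; lra); exact Hr1.
  - intros k t t' [z [Uz Rz]] [z' [Uz' Rz']].
    eapply Rle_trans; [apply (Hlip _ _ _ _ Rz Rz')|].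
    apply Rmult_le_compat_l; [lra | now apply Hdiam].
  - intros t Et; destruct (Hcov t Et) as [z [Fz Rz]].
    destruct (HU z Fz) as [k Uz]; now exists k, z.
  - intros N.
    rewrite (sum_eq _ (fun k => Rpower (r k) s * Rpower L s)).
    + rewrite <- scal_sum.
      replace eps with (Rpower L s * (eps / Rpower L s)) by (field; lra).
      apply Rmult_le_compat_l; [lra | apply Hsum].
    + intros k _; rewrite <- Rpower_mult_distr by (exact HL || apply Hr); ring.
Qed.

Lemma pow_le_Rpower (r s : R) (n : nat) :
  0 < r <= 1 -> s <= INR n -> r ^ n <= Rpower r s.
Proof.
  intros [H0 H1] Hs; rewrite <- Rpower_pow by exact H0; unfold Rpower.
  assert (ln r <= 0).
  { rewrite <- ln_1; destruct H1 as [H1|H1];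
      [left; apply ln_increasing; lra | rewrite H1; lra]. }
  destruct (Req_dec (INR n * ln r) (s * ln r)) as [E|E];
    [rewrite E; lra | left; apply exp_increasing; nra].
Qed.

(* Each covering set of diameter r <= 1 lies in a cube of side 2 r about any
   of its points, and (2 r)^n <= 2^n r^s. *)
Lemma lebesgue_null_of_hausdorff_null n s (E : (nat -> R) -> Prop) :
  s <= INR n -> hausdorff_null n s E -> lebesgue_null n E.
Proof.
  intros Hs HE eps Heps.
  assert (H2n : 0 < 2 ^ n) by (apply pow_lt; lra).
  destruct (HE 1 (eps / 2 ^ n) Rlt_0_1 (Rdiv_lt_0_compat _ _ Heps H2n))
    as [U [r [Hr [Hdiam [HU Hsum]]]]].
  set (ctr k := epsilon (inhabits (fun _ : nat => 0)) (U k)).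
  exists (fun k i => ctr k i - r k), (fun k i => ctr k i + r k).
  split; [|split].
  - intros k i _; destruct (Hr k); lra.
  - intros t Et; destruct (HU t Et) as [k Ut]; exists k; intros i Hi.
    assert (Uc : U k (ctr k)) by (apply epsilon_spec; now exists t).
    pose proof (Rabs_coord_le_edist n t (ctr k) i Hi) as Hc.
    pose proof (Hdiam k t (ctr k) Ut Uc).
    pose proof (Rle_abs (t i - ctr k i)).
    pose proof (Rabs_Ropp (t i - ctr k i)); pose proof (Rle_abs (- (t i - ctr k i))).
    lra.
  - intros N.
    replace eps with (2 ^ n * (eps / 2 ^ n)) by (field; lra).
    eapply Rle_trans; [|apply Rmult_le_compat_l; [lra | apply (Hsum N)]].
    rewrite scal_sum; apply sum_Rle; intros k _.
    rewrite (prodR_ext n _ (fun _ => 2 * r k)) by (intros; ring).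
    rewrite prodR_const, Rpow_mult_distr, (Rmult_comm (Rpower _ _)).
    apply Rmult_le_compat_l; [lra | apply pow_le_Rpower; [apply Hr | exact Hs]].
Qed.

Definition Delta_witness n (A B : (nat -> R) -> Prop) M2
  (f : (nat -> R) -> (nat -> R) -> (nat -> R)) (t z : nat -> R) : Prop :=
  exists x a, B x /\ A a /\
    (forall i, (i < n)%nat -> z i = a i /\ z (n + i)%nat = x i) /\
    (forall i, (i < n)%nat -> a i = M2 * t i + f x t i).

Definition pair_pt n (a b : nat -> R) : nat -> R :=
  fun i => if (i <? n)%nat then a i else b (i - n)%nat.

Lemma pair_pt_coord n a b i :
  (i < n)%nat -> pair_pt n a b i = a i /\ pair_pt n a b (n + i)%nat = b i.
Proof.
  intros Hi; unfold pair_pt; split.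
  - now rewrite (proj2 (Nat.ltb_lt i n) Hi).
  - rewrite (proj2 (Nat.ltb_ge (n + i) n)) by lia; f_equal; lia.
Qed.

Lemma Delta_witness_exists n A B M2 f t : Delta_set n A B M2 f t ->
  exists z, prod_set n A B z /\ Delta_witness n A B M2 f t z.
Proof.
  intros [x [a [Bx [Aa Ht]]]]; exists (pair_pt n a x); split.
  - exists a, x; split; [|split]; auto; intros i Hi; now apply pair_pt_coord.
  - exists x, a; split; [|split; [|split]]; auto; intros i Hi; now apply pair_pt_coord.
Qed.

Lemma edist_Delta_witness n A B M1 M2 f :
  0 < M1 -> M1 < M2 ->
  (forall x y t, B x -> B y -> edist n (f x t) (f y t) <= M1 * edist n x y) ->
  (forall x t t', B x -> edist n (f x t) (f x t') <= M1 * edist n t t') ->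
  forall t t' z z', Delta_witness n A B M2 f t z -> Delta_witness n A B M2 f t' z' ->
  edist n t t' <= sqrt (2 * (1 + M1 ^ 2) / (M2 - M1) ^ 2) * edist (2 * n) z z'.
Proof.
  intros HM1 HM2 Lx Lt t t' z z' [x [a [Bx [_ [Hz Ha]]]]] [x' [a' [Bx' [_ [Hz' Ha']]]]].
  assert (HK : 0 <= 2 * (1 + M1 ^ 2) / (M2 - M1) ^ 2).
  { apply Rlt_le, Rdiv_lt_0_compat; [pose proof (pow2_ge_0 M1); lra | apply pow_lt; lra]. }
  apply edist_le_of_sqdist_le; [apply sqrt_pos|].
  rewrite pow2_sqrt by exact HK; rewrite (sqdist_block n z z' a a' x x' Hz Hz').
  exact (sqdist_inverse_lipschitz n B M1 M2 f HM1 HM2 Lx Lt x x' a a' t t' Bx Bx' Ha Ha').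
Qed.

Theorem mainTheorem4 (n : nat) (A B : (nat -> R) -> Prop) (M1 M2 : R)
  (f : (nat -> R) -> (nat -> R) -> (nat -> R)) :
  dimH_lt (2 * n) (prod_set n A B) (INR n) ->
  0 < M1 -> M1 < M2 ->
  (forall x y t, B x -> B y -> edist n (f x t) (f y t) <= M1 * edist n x y) ->
  (forall x t t', B x -> edist n (f x t) (f x t') <= M1 * edist n t t') ->
  lebesgue_null n (Delta_set n A B M2 f).
Proof.
  intros [s [[_ Hsn] Hnull]] HM1 HM2 Lx Lt.
  apply (lebesgue_null_of_hausdorff_null n s); [lra|].
  apply (hausdorff_null_lipschitz_image (2 * n) n s
           (sqrt (2 * (1 + M1 ^ 2) / (M2 - M1) ^ 2))
           (prod_set n A B) _ (Delta_witness n A B M2 f)).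
  - apply sqrt_lt_R0, Rdiv_lt_0_compat;
      [pose proof (pow2_ge_0 M1); lra | apply pow_lt; lra].
  - exact Hnull.
  - apply Delta_witness_exists.
  - now apply edist_Delta_witness.
Qed.
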